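(* No deterministic strategyproof mechanism for locating an obnoxious facility on $[0,1]$ has a bounded approximation ratio for the geometric mean of utilities: for every deterministic strategyproof mechanism $f$ there exist a number of agents $n$ and a profile $\mathbf x\in[0,1]^n$ with $\big(\prod_i|x_i-f(\mathbf x)|\big)^{1/n}=0$ while $\max_{z\in[0,1]}\big(\prod_i|x_i-z|\big)^{1/n}>0$.
   Context: Agents $i=1,\dots,n$ have private locations $x_i\in[0,1]$; a deterministic mechanism $f:[0,1]^n\to[0,1]$ outputs the facility location; utility $u(x_i,y)=|x_i-y|$. $f$ is strategyproof if for all $\mathbf x$, $i$, $x_i'$: $|x_i-f(\mathbf x)|\ge|x_i-f(x_i',\mathbf x_{-i})|$. The geometric-mean objective of $y$ is $\big(\prod_{i}|x_i-y|\big)^{1/n}$ (the limit $p\to0^+$ of the normalized power mean $(\frac1n\sum_i|x_i-y|^p)^{1/p}$), to be maximized. *)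

From mathcomp Require Import all_boot all_order all_algebra.
From mathcomp Require Import all_classical all_reals all_analysis.
Set Implicit Arguments. Unset Strict Implicit. Unset Printing Implicit Defensive.
Import Order.TTheory GRing.Theory Num.Theory.
Local Open Scope ring_scope.

Definition valid_profile (R : realType) (n : nat) (x : 'I_n -> R) : Prop :=
  forall i, 0 <= x i <= 1.

Definition update (R : realType) (n : nat) (x : 'I_n -> R) (i : 'I_n) (y : R)
  : 'I_n -> R := fun j => if j == i then y else x j.

Definition mechanism (R : realType) := forall n : nat, ('I_n -> R) -> R.

Definition mech_in_unit (R : realType) (f : mechanism R) : Prop :=
  forall n (x : 'I_n -> R), valid_profile x -> 0 <= f n x <= 1.

Definition strategyproof (R : realType) (f : mechanism R) : Prop :=
  forall n (x : 'I_n -> R) (i : 'I_n) (x' : R),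
    valid_profile x -> 0 <= x' <= 1 ->
    `|x i - f n (update x i x')| <= `|x i - f n x|.

Definition geo_mean (R : realType) (n : nat) (x : 'I_n -> R) (y : R) : R :=
  powR (\prod_(i < n) `|x i - y|) (n%:R^-1).

(** Two agents suffice.  A two-agent profile [(a, b)] whose facility sits at
    [a] or [b] has geometric mean [0], while any other point of [[0, 1]] has
    a positive one; so if the theorem failed, [F a b := f (a, b)] would avoid
    both reports.  Strategyproofness then makes every one-agent slice
    [a |-> F a b] (and [b |-> F a b]) a decreasing step function jumping at
    the midpoint of its values at [0] and [1].  The four slices through the
    corners of the square determine [F] at a suitable interior point in two
    incompatible ways. *)

From mathcomp Require Import all_boot all_order all_algebra.
From mathcomp Require Import all_classical all_reals all_analysis.
From mathcomp Require Import lra.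

Set Implicit Arguments.
Unset Strict Implicit.
Unset Printing Implicit Defensive.
Import Order.TTheory GRing.Theory Num.Theory.
Local Open Scope ring_scope.

Lemma zero_in_unit (R : numDomainType) : 0 <= (0 : R) <= 1.
Proof. by rewrite lexx ler01. Qed.

Lemma one_in_unit (R : numDomainType) : 0 <= (1 : R) <= 1.
Proof. by rewrite lexx ler01. Qed.

Section StrategyproofLine.
Variable R : realType.

Definition strategyproof_avoiding (g : R -> R) : Prop :=
  [/\ forall a, 0 <= a <= 1 -> 0 <= g a <= 1,
      forall a a', 0 <= a <= 1 -> 0 <= a' <= 1 -> `|a - g a'| <= `|a - g a|
    & forall a, 0 <= a <= 1 -> g a != a].

Variable g : R -> R.
Hypothesis hg : strategyproof_avoiding g.

Let unit0 := zero_in_unit R.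
Let unit1 := one_in_unit R.

Lemma spa_le0 a : 0 <= a <= 1 -> g a <= g 0.
Proof.
case: hg => g01 gsp _ ha; have := gsp 0 a unit0 ha.
by rewrite !sub0r !normrN !ger0_norm //; [case/andP: (g01 0 unit0) | case/andP: (g01 a ha)].
Qed.

Lemma spa_ge1 a : 0 <= a <= 1 -> g 1 <= g a.
Proof.
case: hg => g01 gsp _ ha; have := gsp 1 a unit1 ha.
have /andP[? ?] := g01 a ha; have /andP[? ?] := g01 1 unit1.
by rewrite !ger0_norm ?subr_ge0 // lerD2l lerN2.
Qed.

Lemma spa_lt : g 1 < g 0.
Proof.
case: hg => g01 _ gfix; rewrite lt_neqAle spa_ge1 // andbT.
apply: contra (gfix _ (g01 0 unit0)) => /eqP g10.
by rewrite eq_le spa_le0 ?g01 //= -g10 spa_ge1 ?g01.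
Qed.

(* Agent [a] must gain nothing by misreporting [0] (resp. [1]). *)
Lemma spa_below_mid a : 0 <= a <= 1 -> a < (g 0 + g 1) / 2 -> g a = g 0.
Proof.
case: hg => _ gsp _ ha ha_mid; have [ga_le0 ga_ge1] := (spa_le0 ha, spa_ge1 ha).
have : g 0 - a <= `|a - g a|.
  by apply: le_trans (gsp a 0 ha unit0); rewrite distrC ler_norm.
by rewrite ler_normr => /orP[] ?; apply/eqP; rewrite eq_le ga_le0 /=; lra.
Qed.

Lemma spa_above_mid a : 0 <= a <= 1 -> (g 0 + g 1) / 2 < a -> g a = g 1.
Proof.
case: hg => _ gsp _ ha ha_mid; have [ga_le0 ga_ge1] := (spa_le0 ha, spa_ge1 ha).
have : a - g 1 <= `|a - g a| by apply: le_trans (gsp a 1 ha unit1); rewrite ler_norm.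
by rewrite ler_normr => /orP[] ?; apply/eqP; rewrite eq_le ga_ge1 andbT; lra.
Qed.

End StrategyproofLine.

Section TwoAgents.
Variables (R : realType) (F : R -> R -> R).
Hypothesis rowF : forall b, 0 <= b <= 1 -> strategyproof_avoiding (F^~ b).
Hypothesis colF : forall a, 0 <= a <= 1 -> strategyproof_avoiding (F a).

Lemma two_agent_strategyproof_avoiding_absurd : False.
Proof.
have [unit0 unit1] := (zero_in_unit R, one_in_unit R).
have [row0 row1] := (rowF unit0, rowF unit1).
have [col0 col1] := (colF unit0, colF unit1).
have F01 a b : 0 <= a <= 1 -> 0 <= b <= 1 -> 0 <= F a b <= 1.
  by move=> ha hb; case: (rowF hb) => /(_ a ha).
move: (F01 0 0 unit0 unit0) (F01 1 0 unit1 unit0) (F01 1 1 unit1 unit1).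
move: (spa_lt row0) (spa_lt row1) (spa_lt col0) (spa_lt col1) => /=.
set A := F 0 0; set B := F 0 1; set C := F 1 0; set D := F 1 1.
move=> CA DB BA DC /andP[? ?] /andP[? ?] /andP[? ?].
(* [a] is left of the threshold of row [0] and right of that of row [1];
   [b] is left of the threshold of column [0] and right of that of column [1]. *)
pose a := (2 * A + C + D) / 4; pose b := (A + C + 2 * D) / 4.
have ha : 0 <= a <= 1 by apply/andP; split; rewrite /a; lra.
have hb : 0 <= b <= 1 by apply/andP; split; rewrite /b; lra.
have Fa0 : F a 0 = A by apply: (spa_below_mid row0) => //=; rewrite -/A -/C /a; lra.
have Fa1 : F a 1 = D by apply: (spa_above_mid row1) => //=; rewrite -/B -/D /a; lra.
have F0b : F 0 b = A by apply: (spa_below_mid col0) => //=; rewrite -/A -/B /b; lra.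
have F1b : F 1 b = D by apply: (spa_above_mid col1) => //=; rewrite -/C -/D /b; lra.
have FabA : F a b = A.
  rewrite -Fa0; apply: (spa_below_mid (colF ha) hb) => /=; rewrite Fa0 Fa1 /b; lra.
have FabD : F a b = D.
  rewrite -F1b; apply: (spa_above_mid (rowF hb) ha) => /=; rewrite F0b F1b /a; lra.
by move: DC CA; rewrite -FabA FabD; lra.
Qed.

End TwoAgents.

Section PairProfiles.
Variable R : realType.

Definition pair_profile (a b : R) : 'I_2 -> R :=
  fun i => if i == ord0 then a else b.

Lemma pair_profile_valid a b :
  0 <= a <= 1 -> 0 <= b <= 1 -> valid_profile (pair_profile a b).
Proof. by move=> ha hb i; rewrite /pair_profile; case: ifP. Qed.

Lemma update_pair_profile0 a b a' :
  update (pair_profile a b) ord0 a' = pair_profile a' b.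
Proof. by apply: funext => -[[|[|k]] Hk]. Qed.

Lemma update_pair_profile1 a b b' :
  update (pair_profile a b) ord_max b' = pair_profile a b'.
Proof. by apply: funext => -[[|[|k]] Hk]. Qed.

Lemma geo_mean_pair_eq0 a b y :
  (geo_mean (pair_profile a b) y == 0) = (y == a) || (y == b).
Proof.
rewrite /geo_mean !big_ord_recr big_ord0 /= mul1r powR_eq0 invr_eq0 pnatr_eq0 andbT.
by rewrite mulf_eq0 !normr_eq0 !subr_eq0 ![_ == y]eq_sym.
Qed.

Lemma geo_mean_pair_gt0 a b y :
  (0 < geo_mean (pair_profile a b) y) = (y != a) && (y != b).
Proof. by rewrite lt0r powR_ge0 andbT geo_mean_pair_eq0 negb_or. Qed.

Lemma exists_unit_avoiding (a b : R) : exists2 z : R, 0 <= z <= 1 & (z != a) && (z != b).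
Proof.
have [z0|not0] := boolP ((0 != a) && (0 != b)); first by exists 0; rewrite ?zero_in_unit.
have [z1|not1] := boolP ((1 != a) && (1 != b)); first by exists 1; rewrite ?one_in_unit.
exists (1 / 2); first by apply/andP; split; lra.
move: not0 not1; rewrite !negb_and !negbK => /orP[]/eqP ? /orP[]/eqP ?;
  by apply/andP; split; apply/eqP; lra.
Qed.

End PairProfiles.

Theorem theorem7 (R : realType) (f : mechanism R) :
  mech_in_unit f -> strategyproof f ->
  exists (n : nat) (x : 'I_n -> R),
    valid_profile x /\
    geo_mean x (f n x) = 0 /\
    exists z : R, 0 <= z <= 1 /\ 0 < geo_mean x z.
Proof.
move=> f01 fsp; apply: contrapT => no_witness.
pose F a b := f 2 (pair_profile a b).
have Favoid a b : 0 <= a <= 1 -> 0 <= b <= 1 -> (F a b != a) && (F a b != b).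
  move=> ha hb; rewrite -negb_or -geo_mean_pair_eq0; apply/eqP => gm0.
  have [z hz zab] := exists_unit_avoiding a b.
  apply: no_witness; exists 2%N, (pair_profile a b).
  by split; [exact: pair_profile_valid | split=> //; exists z; rewrite geo_mean_pair_gt0].
apply: (@two_agent_strategyproof_avoiding_absurd R F) => [b hb | a ha]; split.
- by move=> a ha; apply/f01/pair_profile_valid.
- move=> a a' ha ha'.
  by have := fsp 2%N _ ord0 a' (pair_profile_valid ha hb) ha'; rewrite update_pair_profile0.
- by move=> a ha; case/andP: (Favoid a b ha hb).
- by move=> b hb; apply/f01/pair_profile_valid.
- move=> b b' hb hb'.
  by have := fsp 2%N _ ord_max b' (pair_profile_valid ha hb) hb'; rewrite update_pair_profile1.
- by move=> b hb; case/andP: (Favoid a b ha hb).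
Qed.
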